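(* In a finite dynamic game as described in the context, let $K^i$ be unilaterally sufficient information for player $i$, with associated functions $F_t^{i,g^i}$. For every behavioral strategy $g^i$ of player $i$, let $\rho^i$ be the $K^i$-based strategy given by $$\rho_t^i(u_t^i\mid k_t^i)=\sum_{\tilde h_t^i\in\mathcal{H}_t^i}g_t^i(u_t^i\mid\tilde h_t^i)\,F_t^{i,g^i}(\tilde h_t^i\mid k_t^i).$$ Then $J^j(g^i,g^{-i})=J^j(\rho^i,g^{-i})$ for all players $j\in\mathcal{I}$ and all behavioral strategy profiles $g^{-i}$ of the players other than $i$.
   Context: Game model: finite set of players $\mathcal{I}$, times $\mathcal{T}=\{1,\dots,T\}$. At time $t$ each player $i$ takes action $U_t^i\in\mathcal{U}_t^i$, obtains reward $R_t^i\in[-1,1]$ and learns new information $Z_t^i\in\mathcal{Z}_t^i$. There is a state $X_t\in\mathcal{X}_t$ with $(X_{t+1},Z_t,R_t)=f_t(X_t,U_t,W_t)$ for fixed functions $f_t$. Primitive random variables $(X_1,H_1)$ and $W_1,\dots,W_T$ are mutually independent with commonly known distributions. All sets are finite. Perfect recall: $H_t^i=(H_1^i,Z_{1:t-1}^i)\in\mathcal{H}_t^i$, and $U_t^i$ is a component of $Z_t^i$. Behavioral strategy $g_t^i:\mathcal{H}_t^i\to\Delta(\mathcal{U}_t^i)$; payoff $J^j(g)=\mathbb{E}^g[\sum_t R_t^j]$. A realization is admissible under $g$ if it has positive probability under $g$. Compression: $K_1^i=\iota_1^i(H_1^i)$, $K_t^i=\iota_t^i(K_{t-1}^i,Z_{t-1}^i)$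 for fixed maps, finite value sets $\mathcal{K}_t^i$; $k_t^i$ is the compression of $h_t^i$; a $K^i$-based strategy has $\rho_t^i:\mathcal{K}_t^i\to\Delta(\mathcal{U}_t^i)$. Unilaterally sufficient information (USI): $K^i$ is USI for player $i$ if there exist $F_t^{i,g^i}:\mathcal{K}_t^i\to\Delta(\mathcal{H}_t^i)$ depending only on $g^i$ and $\Phi_t^{i,g^{-i}}:\mathcal{K}_t^i\to\Delta(\mathcal{X}_t\times\mathcal{H}_t^{-i})$ depending only on $g^{-i}$ with $\Pr^g(x_t,h_t\mid k_t^i)=F_t^{i,g^i}(h_t^i\mid k_t^i)\Phi_t^{i,g^{-i}}(x_t,h_t^{-i}\mid k_t^i)$ for all behavioral profiles $g$, all $t$, all $k_t^i$ admissible under $g$ (with $x_t,h_t^i,h_t^{-i}$ ranging independently; the left side is $0$ if they disagree on shared components). *)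

(* Finite dynamic games, compressions, unilaterally
   sufficient information (USI), and payoffs. Times are 0-based:
   t = 0, ..., horizon-1 correspond to the paper's 1, ..., T. *)
From HB Require Import structures.
From mathcomp Require Import all_boot all_order all_algebra.
From mathcomp Require Import reals.
Set Implicit Arguments.
Unset Strict Implicit.
Unset Printing Implicit Defensive.
Import Order.TTheory GRing.Theory Num.Theory.
Local Open Scope ring_scope.

Unset Implicit Arguments.
Record game (R : realType) := Game {
  player : finType;
  horizon : nat;
  stateT : nat -> finType;
  actT : nat -> player -> finType;
  infoT : nat -> player -> finType;
  noiseT : nat -> finType;
  init_infoT : player -> finType;
  dyn : forall t, stateT t -> {dffun forall i, actT t i} -> noiseT t ->
        stateT t.+1 * {dffun forall i, infoT t i} * (player -> R);
  init_law : stateT 0 -> {dffun forall i, init_infoT i} -> R;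
  (* law of the primitive W_t; independence is built into [state_law] *)
  noise_law : forall t, noiseT t -> R;
  init_law_ge0 : forall x h, 0 <= init_law x h;
  init_law_sum1 : \sum_(x : stateT 0) \sum_(h : {dffun forall i, init_infoT i})
                    init_law x h = 1;
  noise_law_ge0 : forall t (w : noiseT t), (t < horizon)%N -> 0 <= noise_law t w;
  noise_law_sum1 : forall t, (t < horizon)%N -> \sum_(w : noiseT t) noise_law t w = 1;
  reward_bound : forall t (x : stateT t) u (w : noiseT t) i, (t < horizon)%N ->
                   -1 <= (dyn t x u w).2 i <= 1;
  (* U_t^i is a component of Z_t^i *)
  act_of_info : forall t i, infoT t i -> actT t i;
  act_in_info : forall t (x : stateT t) u (w : noiseT t) i,
      act_of_info t i ((dyn t x u w).1.2 i) = u i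
}.
Set Implicit Arguments.
Arguments player {R}.
Arguments horizon {R}.
Arguments stateT {R}.
Arguments actT {R}.
Arguments infoT {R}.
Arguments noiseT {R}.
Arguments init_infoT {R}.
Arguments dyn {R} g {t}.
Arguments init_law {R}.
Arguments noise_law {R} g {t}.
Arguments act_of_info {R} g {t i}.

Section GameDefs.
Context {R : realType} (G : game R).

(* H_t^i = (H_1^i, Z_{1:t-1}^i) (perfect recall) *)
Fixpoint hist (i : player G) (t : nat) : finType :=
  match t with
  | 0 => init_infoT G i
  | t'.+1 => (hist i t' * infoT G t' i)%type
  end.

(* behavioral strategies g_t^i : H_t^i -> Delta(U_t^i), as weights *)
Definition strat (i : player G) := forall t, hist i t -> actT G t i -> R.
Definition profile := forall i : player G, strat i.

Definition valid_strat (i : player G) (s : strat i) : Prop :=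
  forall t, (t < horizon G)%N -> forall h : hist i t,
    (forall u, 0 <= s t h u) /\ \sum_(u : actT G t i) s t h u = 1.

Definition valid_profile (g : profile) : Prop := forall i, valid_strat (g i).

Definition pact (g : profile) t (h : {dffun forall i, hist i t})
    (u : {dffun forall i, actT G t i}) : R :=
  \prod_(i : player G) g i t (h i) (u i).

(* Pr^g(X_t = x, H_t = h) *)
Fixpoint state_law (g : profile) (t : nat) :
    stateT G t -> {dffun forall i, hist i t} -> R :=
  match t as n return stateT G n -> {dffun forall i, hist i n} -> R with
  | 0 => init_law G
  | t'.+1 => fun x' h' =>
      \sum_(x : stateT G t') \sum_(h : {dffun forall i, hist i t'})
      \sum_(u : {dffun forall i, actT G t' i}) \sum_(w : noiseT G t')
        state_law g x h * pact g h u * noise_law G w *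
        (((dyn G x u w).1.1 == x') &&
         [forall i, h' i == (h i, (dyn G x u w).1.2 i)])%:R
  end.

Definition payoff (g : profile) (j : player G) : R :=
  \sum_(t < horizon G) \sum_(x : stateT G t) \sum_(h : {dffun forall i, hist i t})
    state_law g x h * \sum_(u : {dffun forall i, actT G t i}) pact g h u *
      \sum_(w : noiseT G t) noise_law G w * (dyn G x u w).2 j.

Definition upd (g : profile) (i : player G) (s : strat i) : profile :=
  fun j => match i =P j with
           | ReflectT e => eq_rect i strat s j e
           | ReflectF _ => g j
           end.

Record compression (i : player G) := Compression {
  kT : nat -> finType;
  iota0 : init_infoT G i -> kT 0;
  iotaS : forall t, kT t -> infoT G t i -> kT t.+1
}.

Fixpoint compress (i : player G) (c : compression i) (t : nat) :
    hist i t -> kT c t :=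
  match t as n return hist i n -> kT c n with
  | 0 => fun h => @iota0 i c h
  | t'.+1 => fun h => @iotaS i c t' (@compress i c t' h.1) h.2
  end.

Definition kstrat (i : player G) (c : compression i) :=
  forall t, kT c t -> actT G t i -> R.

Definition kstrat_lift (i : player G) (c : compression i) (rho : kstrat c) :
    strat i := fun t h u => rho t (compress c h) u.

Definition others (i : player G) : finType := {j : player G | j != i}.
Definition ohist (i : player G) t := {dffun forall j : others i, hist (sval j) t}.
Definition restr_hist (i : player G) t (h : {dffun forall j, hist j t}) : ohist i t :=
  @finfun (others i) (fun j => hist (sval j) t) (fun j => h (sval j)).
Definition ostrat (i : player G) := forall j : others i, strat (sval j).
Definition restr_prof (i : player G) (g : profile) : ostrat i :=
  fun j => g (sval j).

Definition prob_k (g : profile) (i : player G) (c : compression i) t (k : kT c t) : R :=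
  \sum_(x : stateT G t) \sum_(h : {dffun forall j, hist j t})
    state_law g x h * (compress c (h i) == k)%:R.

Definition cond_prob (g : profile) (i : player G) (c : compression i) t
    (k : kT c t) (x : stateT G t) (h : {dffun forall j, hist j t}) : R :=
  state_law g x h * (compress c (h i) == k)%:R / prob_k g k.

(* K^i is USI for player i, with witnesses F (depending only on g^i) and
   Phi (depending only on g^{-i}). *)
Definition USI_with (i : player G) (c : compression i)
    (F : strat i -> forall t, kT c t -> hist i t -> R)
    (Phi : ostrat i -> forall t, kT c t -> stateT G t -> ohist i t -> R) : Prop :=
  (forall s, valid_strat s -> forall t, (t < horizon G)%N -> forall k,
     (forall h, 0 <= F s t k h) /\ \sum_(h : hist i t) F s t k h = 1) /\
  (forall s' : ostrat i, (forall j, valid_strat (s' j)) ->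
     forall t, (t < horizon G)%N -> forall k,
     (forall x ho, 0 <= Phi s' t k x ho) /\
     \sum_(x : stateT G t) \sum_(ho : ohist i t) Phi s' t k x ho = 1) /\
  (forall g : profile, valid_profile g ->
     forall t, (t < horizon G)%N -> forall k : kT c t, 0 < prob_k g k ->
     forall x (h : {dffun forall j, hist j t}),
       cond_prob g k x h = F (g i) t k (h i) * Phi (@restr_prof i g) t k x (@restr_hist i t h)).

Definition USI (i : player G) (c : compression i) : Prop :=
  exists F Phi, @USI_with i c F Phi.

Definition rho_of (i : player G) (c : compression i)
    (F : strat i -> forall t, kT c t -> hist i t -> R) (s : strat i) : kstrat c :=
  fun t k u => \sum_(h : hist i t) s t h u * F s t k h.

End GameDefs.

(* Write Y_t = (H_t^{-i}, K_t^i).  If, conditionally on (X_t, Y_t), player i's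
   action U_t^i has law rho_t(. | K_t^i), then the joint law of (X_t, Y_t)
   evolves by a kernel built from rho, g^{-i} and the dynamics alone: indeed
   (X_{t+1}, Y_{t+1}) and R_t are functions of (X_t, Y_t, U_t, W_t), and U_t^{-i}
   depends only on H_t^{-i}.  So two such profiles that agree off player i give
   (X_t, Y_t) the same law at every t, hence the same payoffs.  The profile
   (rho, g^{-i}) has the property by construction.  So does (g^i, g^{-i}), by USI:
   given K_t^i = k, H_t^i is independent of (X_t, H_t^{-i}) with law F(. | k), and
   averaging g^i(. | H_t^i) against F(. | k) is exactly rho_t(. | k). *)

From HB Require Import structures.
From mathcomp Require Import all_boot all_order all_algebra.
From mathcomp Require Import reals ring.
Import Order.TTheory GRing.Theory Num.Theory.
Local Open Scope ring_scope.
Set Implicit Arguments.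
Unset Strict Implicit.

Lemma sum_eq_indicator (R : pzSemiRingType) (T : finType) (a : T) (f : T -> R) :
  \sum_(y : T) (a == y)%:R * f y = f a.
Proof.
under eq_bigr do rewrite mulr_natl mulrb eq_sym.
by rewrite -big_mkcond big_pred1_eq.
Qed.

Section DffunSplit.
Variables (I : finType) (i : I) (T : I -> finType).

Definition restr_dffun (h : {dffun forall j, T j}) :
    {dffun forall j : {j | j != i}, T (sval j)} :=
  @finfun _ (fun j => T (sval j)) (fun j => h (sval j)).

(* A named constant, so that [case: (i =P j)] does not abstract [j == i] inside it. *)
Definition neq_of_ne (j : I) (ne : i <> j) : j != i :=
  introN (@eqP _ j i) (fun e => ne (esym e)).

Definition merge_at (hi : T i) (ho : {dffun forall j : {j | j != i}, T (sval j)})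
    (j : I) : T j :=
  match i =P j with
  | ReflectT e => eq_rect i T hi j e
  | ReflectF ne => ho (exist _ j (neq_of_ne ne))
  end.

Definition merge_dffun hi ho : {dffun forall j, T j} := finfun (merge_at hi ho).

Lemma merge_dffun_at hi ho : merge_dffun hi ho i = hi.
Proof.
rewrite ffunE /merge_at; case: (i =P i) => [e|//].
by rewrite (eq_irrelevance e erefl).
Qed.

Lemma restr_merge_dffun hi ho : restr_dffun (merge_dffun hi ho) = ho.
Proof.
apply/ffunP => -[j ji]; rewrite !ffunE /merge_at /=.
case: (i =P j) => [e|ne]; first by exfalso; move: ji; rewrite -e eqxx.
by congr (ho (exist _ j _)); apply: bool_irrelevance.
Qed.

Lemma merge_restr_dffun (h : {dffun forall j, T j}) :
  merge_dffun (h i) (restr_dffun h) = h.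
Proof.
apply/ffunP => j; rewrite ffunE /merge_at; case: (i =P j) => [e|ne]; last by rewrite ffunE.
by case: j / e.
Qed.

Lemma sum_dffun_restr (R : pzSemiRingType) (f : T i -> R) ho :
  \sum_(h : {dffun forall j, T j}) f (h i) * (restr_dffun h == ho)%:R =
  \sum_(hi : T i) f hi.
Proof.
under eq_bigr do rewrite mulr_natr mulrb.
rewrite -big_mkcond.
rewrite (reindex_onto (merge_dffun^~ ho) (fun h : {dffun forall j, T j} => h i)); last first.
  by move=> h /eqP <-; rewrite merge_restr_dffun.
apply: eq_big => hi; last by rewrite merge_dffun_at.
by rewrite restr_merge_dffun merge_dffun_at !eqxx.
Qed.

Lemma big_sig_neq (V : Type) (idx : V) (op : Monoid.com_law idx) (f : I -> V) :
  \big[op/idx]_(j | j != i) f j = \big[op/idx]_(j : {j | j != i}) f (sval j).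
Proof.
rewrite (reindex_omap (sval : {j | j != i} -> I) insub); last first.
  by move=> j ji; rewrite insubT.
apply: eq_bigl => -[j ji] /=; rewrite insubT ji; apply/eqP; congr Some; exact: val_inj.
Qed.

End DffunSplit.

Section GameFacts.
Variables (R : realType) (G : game R).

Lemma upd_self (p : profile G) i (s : strat i) : @upd _ _ p i s i = s.
Proof.
rewrite /upd; case: (i =P i) => [e|//].
by rewrite (eq_irrelevance e erefl).
Qed.

Lemma upd_other (p : profile G) i (s : strat i) j : j != i -> @upd _ _ p i s j = p j.
Proof. by move=> ji; rewrite /upd; case: (i =P j) => [e|//]; rewrite e eqxx in ji. Qed.

Lemma state_law_ge0 (p : profile G) t (x : stateT G t) h :
  valid_profile p -> (t <= horizon G)%N -> 0 <= state_law p x h.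
Proof.
move=> vp; elim: t x h => [|t IH] x h ht /=; first exact: init_law_ge0.
do 4 (apply: sumr_ge0 => ? _); rewrite mulr_ge0 ?ler0n // mulr_ge0 ?noise_law_ge0 //.
rewrite mulr_ge0 ?IH 1?ltnW //.
by apply: prodr_ge0 => j _; apply: (vp j t ht _).1.
Qed.

Lemma prob_k_ge0 (p : profile G) i (c : compression i) t (k : kT c t) :
  valid_profile p -> (t <= horizon G)%N -> 0 <= prob_k p k.
Proof.
by move=> vp ht; do 2 (apply: sumr_ge0 => ? _); rewrite mulr_ge0 ?ler0n ?state_law_ge0.
Qed.

Lemma state_law_eq0_of_prob_k_eq0 (p : profile G) i (c : compression i) t (k : kT c t) x h :
  valid_profile p -> (t <= horizon G)%N -> prob_k p k = 0 ->
  state_law p x h * (compress c (h i) == k)%:R = 0.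
Proof.
move=> vp ht pk0.
have term_ge0 x' (h' : {dffun forall j, hist j t}) :
    0 <= state_law p x' h' * (compress c (h' i) == k)%:R.
  by rewrite mulr_ge0 ?ler0n ?state_law_ge0.
have sum_x0 := psumr_eq0P (fun x' _ => sumr_ge0 _ (fun h' _ => term_ge0 x' h')) pk0.
exact: (psumr_eq0P (fun h' _ => term_ge0 x h') (sum_x0 x isT)).
Qed.

End GameFacts.

Section Summary.
Variables (R : realType) (G : game R) (i : player G) (c : compression i).

Definition pact_others (p : profile G) t (ho : ohist i t)
    (u : {dffun forall j, actT G t j}) : R :=
  \prod_(j : others i) p (sval j) t (ho j) (u (sval j)).

Lemma pact_split (p : profile G) t h u :
  pact p h u = p i t (h i) (u i) * pact_others p (restr_hist i h) u.
Proof.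
rewrite /pact (bigD1 i) //= big_sig_neq.
by congr (_ * _); apply: eq_bigr => j _; rewrite ffunE.
Qed.

Lemma eq_pact_others (p p' : profile G) t ho u :
  (forall j, j != i -> p j = p' j) -> pact_others p ho u = pact_others p' (t:=t) ho u.
Proof. by move=> pp'; apply: eq_bigr => -[j ji] _ /=; rewrite pp'. Qed.

Definition summary t (h : {dffun forall j, hist j t}) : ohist i t * kT c t :=
  (restr_hist i h, compress c (h i)).

Definition summary_law (p : profile G) t (x : stateT G t) (y : ohist i t * kT c t) : R :=
  \sum_(h : {dffun forall j, hist j t}) state_law p x h * (summary h == y)%:R.

(* Given (X_t, Y_t) = (x, (h^{-i}, k)), player i's action has law r(. | k); stated
   without dividing by the probability of (x, y). *)
Definition acts_via_summary (p : profile G) t (r : kT c t -> actT G t i -> R) : Prop :=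
  forall x y a, \sum_(h : {dffun forall j, hist j t})
    state_law p x h * p i t (h i) a * (summary h == y)%:R = summary_law p x y * r y.2 a.

Lemma expect_by_summary (p : profile G) t r
    (Psi : stateT G t -> ohist i t * kT c t -> {dffun forall j, actT G t j} -> R) :
  acts_via_summary p r ->
  \sum_(x : stateT G t) \sum_(h : {dffun forall j, hist j t})
     state_law p x h * \sum_(u : {dffun forall j, actT G t j}) pact p h u * Psi x (summary h) u
  = \sum_(x : stateT G t) \sum_(y : ohist i t * kT c t) summary_law p x y *
     \sum_(u : {dffun forall j, actT G t j}) r y.2 (u i) * pact_others p y.1 u * Psi x y u.
Proof.
move=> p_via; apply: eq_bigr => x _.
transitivity (\sum_(h : {dffun forall j, hist j t}) \sum_(u : {dffun forall j, actT G t j})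
   \sum_(y : ohist i t * kT c t) (summary h == y)%:R *
     (state_law p x h * p i t (h i) (u i) * (pact_others p y.1 u * Psi x y u))).
  apply: eq_bigr => h _; rewrite mulr_sumr; apply: eq_bigr => u _.
  by rewrite sum_eq_indicator pact_split; ring.
rewrite exchange_big; under eq_bigr do rewrite exchange_big.
rewrite exchange_big; apply: eq_bigr => y _; rewrite mulr_sumr; apply: eq_bigr => u _.
rewrite (eq_bigr (fun h => state_law p x h * p i t (h i) (u i) * (summary h == y)%:R *
                           (pact_others p y.1 u * Psi x y u))) => [|h _]; last by ring.
by rewrite -mulr_suml p_via; ring.
Qed.

Definition extend_hist t (h : {dffun forall j, hist j t})
    (z : {dffun forall j, infoT G t j}) : {dffun forall j, hist j t.+1} :=
  @finfun _ (fun j => hist j t.+1) (fun j => (h j, z j)).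

Lemma sum_state_law_succ (p : profile G) t x' (f : {dffun forall j, hist j t.+1} -> R) :
  \sum_(h' : {dffun forall j, hist j t.+1}) state_law p x' h' * f h' =
  \sum_(x : stateT G t) \sum_(h : {dffun forall j, hist j t})
  \sum_(u : {dffun forall j, actT G t j}) \sum_(w : noiseT G t)
    state_law p x h * pact p h u * noise_law G w * ((dyn G x u w).1.1 == x')%:R *
    f (extend_hist h (dyn G x u w).1.2).
Proof.
under eq_bigr do rewrite /= mulr_suml; rewrite exchange_big; apply: eq_bigr => x _.
under eq_bigr do rewrite mulr_suml; rewrite exchange_big; apply: eq_bigr => h _.
under eq_bigr do rewrite mulr_suml; rewrite exchange_big; apply: eq_bigr => u _.
under eq_bigr do rewrite mulr_suml; rewrite exchange_big; apply: eq_bigr => w _.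
rewrite (bigD1 (extend_hist h (dyn G x u w).1.2)) //= big1 ?addr0 => [|h' h'E].
  by rewrite (_ : [forall j, _] = true) ?andbT //; apply/forallP => j; rewrite ffunE.
suff /negbTE-> : ~~ [forall j, h' j == (h j, (dyn G x u w).1.2 j)].
  by rewrite andbF !mulr0 mul0r.
apply: contraNN h'E => /forallP eq_h'.
by apply/eqP/ffunP => j; rewrite ffunE; exact/eqP/eq_h'.
Qed.

Definition summary_next t (y : ohist i t * kT c t) (z : {dffun forall j, infoT G t j}) :
    ohist i t.+1 * kT c t.+1 :=
  (@finfun (others i) (fun j => hist (sval j) t.+1) (fun j => (y.1 j, z (sval j))),
   iotaS y.2 (z i)).

Lemma summary_extend t (h : {dffun forall j, hist j t}) z :
  summary (extend_hist h z) = summary_next (summary h) z.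
Proof. by congr pair; [apply/ffunP => j; rewrite !ffunE | rewrite /= ffunE]. Qed.

Definition summary_kernel t (x' : stateT G t.+1) (y' : ohist i t.+1 * kT c t.+1)
    (x : stateT G t) (y : ohist i t * kT c t) (u : {dffun forall j, actT G t j}) : R :=
  \sum_(w : noiseT G t) noise_law G w * ((dyn G x u w).1.1 == x')%:R *
     (summary_next y (dyn G x u w).1.2 == y')%:R.

Lemma summary_law_succ (p : profile G) t x' y' :
  summary_law p (t:=t.+1) x' y' =
  \sum_(x : stateT G t) \sum_(h : {dffun forall j, hist j t}) state_law p x h *
     \sum_(u : {dffun forall j, actT G t j}) pact p h u * summary_kernel x' y' x (summary h) u.
Proof.
rewrite /summary_law sum_state_law_succ; apply: eq_bigr => x _; apply: eq_bigr => h _.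
rewrite mulr_sumr; apply: eq_bigr => u _; rewrite !mulr_sumr; apply: eq_bigr => w _.
by rewrite summary_extend; ring.
Qed.

Lemma lift_acts_via_summary (p : profile G) (rho : kstrat c) t :
  acts_via_summary (upd p (kstrat_lift rho)) (rho t).
Proof.
move=> x y a; rewrite /summary_law mulr_suml; apply: eq_bigr => h _.
rewrite upd_self /kstrat_lift; case: eqP => [<-|_]; last by rewrite !mulr0 mul0r.
by rewrite !mulr1.
Qed.

Section SameActionLaw.
Local Unset Implicit Arguments.
Variables (p p' : profile G) (r : forall t, kT c t -> actT G t i -> R).
Hypothesis agree_others : forall j, j != i -> p j = p' j.
Hypothesis p_via : forall t, (t < horizon G)%N -> acts_via_summary p (r t).
Hypothesis p'_via : forall t, (t < horizon G)%N -> acts_via_summary p' (r t).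

Lemma summary_law_agree t : (t <= horizon G)%N -> forall x y,
  summary_law p (t:=t) x y = summary_law p' x y.
Proof.
elim: t => [//|t IH] ht x' y'.
rewrite !summary_law_succ.
rewrite (expect_by_summary _ (p_via t ht)) (expect_by_summary _ (p'_via t ht)).
apply: eq_bigr => x _; apply: eq_bigr => y _; rewrite IH 1?ltnW //; congr (_ * _).
by apply: eq_bigr => u _; rewrite (eq_pact_others _ _ agree_others).
Qed.

Lemma payoff_agree j : payoff p j = payoff p' j.
Proof.
apply: eq_bigr => -[t ht] _ /=.
pose reward x (_ : ohist i t * kT c t) u :=
  \sum_(w : noiseT G t) noise_law G w * (dyn G x u w).2 j.
rewrite (expect_by_summary reward (p_via t ht)) (expect_by_summary reward (p'_via t ht)).
apply: eq_bigr => x _; apply: eq_bigr => y _; rewrite summary_law_agree 1?ltnW //.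
by congr (_ * _); apply: eq_bigr => u _; rewrite (eq_pact_others _ _ agree_others).
Qed.

End SameActionLaw.

End Summary.

Section UsiActionLaw.
Local Unset Implicit Arguments.
Variables (R : realType) (G : game R) (i : player G) (c : compression i)
  (F : strat i -> forall t, kT c t -> hist i t -> R)
  (Phi : ostrat i -> forall t, kT c t -> stateT G t -> ohist i t -> R).
Hypothesis usi : USI_with F Phi.
Variable g : profile G.
Hypothesis valid_g : valid_profile g.

Lemma usi_joint_factor t (ht : (t < horizon G)%N) (k : kT c t) x h :
  state_law g x h * (compress c (h i) == k)%:R =
  prob_k g k * (F (g i) t k (h i) * Phi (restr_prof g) t k x (restr_hist i h)).
Proof.
have [_ [_ usi_cond]] := usi.
(* When Pr(K_t^i = k) = 0 the USI identity is void, but then both sides vanish. *)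
have [pk_gt0|] := boolP (0 < prob_k g k).
  by rewrite -usi_cond // /cond_prob [prob_k g k * _]mulrC divfK ?gt_eqF.
rewrite lt0r prob_k_ge0 1?ltnW // andbT negbK => /eqP pk0.
by rewrite pk0 mul0r (state_law_eq0_of_prob_k_eq0 _ _ valid_g) 1?ltnW.
Qed.

Lemma usi_sum_summary t (ht : (t < horizon G)%N) x ho k (f : hist i t -> R) :
  \sum_(h : {dffun forall j, hist j t})
    state_law g x h * f (h i) * (summary c h == (ho, k))%:R =
  prob_k g k * Phi (restr_prof g) t k x ho * \sum_(hi : hist i t) F (g i) t k hi * f hi.
Proof.
rewrite -(sum_dffun_restr (T := fun j => hist j t) (fun hi => F (g i) t k hi * f hi) ho).
rewrite mulr_sumr; apply: eq_bigr => h _; rewrite /summary xpair_eqE.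
case: eqP => [<-|_]; last by rewrite andFb !mulr0.
by rewrite mulr1 mulrAC usi_joint_factor //; ring.
Qed.

Lemma usi_summary_law t (ht : (t < horizon G)%N) x ho k :
  summary_law g x (ho, k) = prob_k g k * Phi (restr_prof g) t k x ho.
Proof.
have [_ F_sum1] := usi.1 (g i) (valid_g i) t ht k.
rewrite /summary_law; under eq_bigr do rewrite -[state_law _ _ _]mulr1.
rewrite (usi_sum_summary _ ht _ _ _ (fun _ => 1)).
by under eq_bigr do rewrite mulr1; rewrite F_sum1 mulr1.
Qed.

Lemma usi_acts_via_summary t : (t < horizon G)%N ->
  acts_via_summary g (rho_of F (g i) (t:=t)).
Proof.
move=> ht x [ho k] a.
rewrite (usi_sum_summary _ ht _ _ _ (fun hi => g i t hi a)) usi_summary_law //.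
by congr (_ * _); apply: eq_bigr => hi _; rewrite mulrC.
Qed.

End UsiActionLaw.

Theorem lemma5 (R : realType) (G : game R) (i : player G) (c : compression i)
    (F : strat i -> forall t, kT c t -> hist i t -> R)
    (Phi : ostrat i -> forall t, kT c t -> stateT G t -> ohist i t -> R) :
  USI_with F Phi ->
  forall g : profile G, valid_profile g ->
  forall j : player G,
    payoff g j = payoff (upd g (kstrat_lift (rho_of F (g i)))) j.
Proof.
move=> usi g valid_g j.
apply: (payoff_agree _ _ _ c _ _ (fun t => rho_of F (g i) (t:=t))).
- by move=> j' j'i; rewrite upd_other.
- exact: (usi_acts_via_summary _ _ _ _ _ _ usi _ valid_g).
- by move=> t _; apply: lift_acts_via_summary.
Qed.
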